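(* For any digraph $G$, $1+\mathrm{cr}(G)\ge\mathrm{lifo}_{\mathtt{mi}}(G)$.
   Context: All digraphs are finite, simple, without self-loops and have at least one vertex (induced subgraphs appearing as game data may be empty). For a finite set $V$, $V^*$ is the set of finite words over $V$, $\epsilon$ the empty word; $X \preceq Y$ means $X$ is a prefix of $Y$; for $X=a_1\cdots a_n$, $|X|=n$ and $\mathrm{let}(X)=\{a_1,\dots,a_n\}$. $A\Delta B$ is symmetric difference. For $X\subseteq V(G)$, $G\setminus X$ is the subgraph induced by $V(G)\setminus X$. Induced subgraphs are identified with their vertex sets. A subgraph $H\subseteq G$ is successor-closed if there is no edge of $G$ from $H$ to $G\setminus H$. Cycle-rank $\mathrm{cr}(G)$: $0$ if $G$ is acyclic; $1+\min_{v\in V(G)}\mathrm{cr}(G\setminus\{v\})$ if $G$ is strongly connected (and not acyclic); otherwise the maximum of $\mathrm{cr}(H)$ over strongly connected components $H$ of $G$. A position is a pair $(X,R)$ with $X\in V(G)^*$ and $R$ a (possibly empty) induced subgraph of $G\setminus\mathrm{let}(X)$; it is an $\mathtt{i}$-position if $R$ is successor-closed. An $\mathtt{i}$-position $(X',R')$ is an $\mathtt{i}$-successor of $(X,R)$ if ($X\preceq X'$ or $X'\preceq X$), $|\mathrm{let}(X)\Delta\mathrm{let}(X')|=1$, and every $v'\in R'$ is reachable by a directed path in $G\setminus(\mathrm{let}(X)\cap\mathrm{let}(X'))$ from some $v\in R$. An $\mathtt{i}$-search from $(X_0,R_0)$ is a finite or infinite sequence of $\mathtt{i}$-positions with each $(X_{i+1},R_{i+1})$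 an $\mathtt{i}$-successor of $(X_i,R_i)$; it is complete if it is infinite or $R_n=\emptyset$ for some $n$, and a complete search is winning for the searchers if $R_n=\emptyset$ for some $n$. A complete search from $(\epsilon,G)$ is monotone if $R_{i+1}\subseteq R_i$ for all $i$, and uses at most $k$ searchers if $|X_i|\le k$ for all $i$. An $\mathtt{i}$-strategy is a function $\sigma$ from $\mathtt{i}$-positions to $V(G)^*$ such that $\sigma(X,R)$ is the first component of some $\mathtt{i}$-successor of $(X,R)$; a search is consistent with $\sigma$ if $X_{i+1}=\sigma(X_i,R_i)$ for all $i$. $\sigma$ is winning if every complete consistent search from $(\epsilon,G)$ is winning for the searchers; it is monotone / uses at most $k$ searchers if every complete consistent search from $(\epsilon,G)$ has that property. $\mathrm{lifo}_{\mathtt{mi}}(G)$ is the minimum $k$ such that there is a monotone winning $\mathtt{i}$-strategy using at most $k$ searchers. *)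

From mathcomp Require Import all_boot.
Set Implicit Arguments.
Unset Strict Implicit.
Unset Printing Implicit Defensive.

(* A digraph is a finite vertex type [T] with an edge relation [e : rel T]
   (simple: at most one edge per ordered pair; no self-loops is a hypothesis
   [irreflexive e] of the theorem). *)
Section Digraph.
Variables (T : finType) (e : rel T).

Definition within (S : {set T}) : rel T :=
  [rel x y | [&& e x y, x \in S & y \in S]].

Definition reach_in (S : {set T}) (x y : T) : bool :=
  [&& x \in S, y \in S & connect (within S) x y].

Definition acyclic_in (S : {set T}) : bool :=
  ~~ [exists x in S, exists y in S, e x y && reach_in S y x].

Definition strongly_connected_in (S : {set T}) : bool :=
  (S != set0) && [forall x in S, forall y in S, reach_in S x y].

Definition scc_in (S : {set T}) (x : T) : {set T} :=
  [set y in S | reach_in S x y && reach_in S y x].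

Definition sccs_in (S : {set T}) : {set {set T}} := [set scc_in S x | x in S].

(* Structural recursion with fuel; with fuel n.+1 the argument has at most n
   vertices, and recursive calls are on sets with strictly fewer vertices.
   In the strongly connected branch S is nonempty, so the unit #|T| of the
   minimum is never used. *)
Fixpoint cr_fuel (n : nat) (S : {set T}) : nat :=
  match n with
  | 0 => 0
  | n'.+1 =>
    if acyclic_in S then 0
    else if strongly_connected_in S then
      (\big[minn/#|T|]_(v in S) cr_fuel n' (S :\ v)).+1
    else \max_(H in sccs_in S) cr_fuel n' H
  end.

Definition cr_of (S : {set T}) : nat := cr_fuel #|T|.+1 S.

Definition cycle_rank : nat := cr_of [set: T].

Definition letters (X : seq T) : {set T} := [set x in X].

Definition succ_closed_in (A R : {set T}) : bool :=
  [forall x in R, forall y, (e x y && (y \in A)) ==> (y \in R)].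

Definition position := (seq T * {set T})%type.

Definition ipos (p : position) : bool :=
  (p.2 \subset ~: letters p.1) && succ_closed_in (~: letters p.1) p.2.

Definition symdiff (A B : {set T}) : {set T} := (A :\: B) :|: (B :\: A).

Definition isucc (p q : position) : bool :=
  [&& ipos q,
      prefix p.1 q.1 || prefix q.1 p.1,
      #|symdiff (letters p.1) (letters q.1)| == 1 &
      [forall v' in q.2, exists v in p.2,
          reach_in (~: (letters p.1 :&: letters q.1)) v v']].

(* A search is a map s : nat -> position, together with its length:
   N = None for an infinite search, N = Some n for the finite search
   s 0, ..., s n. *)
Definition in_range (N : option nat) (i : nat) : bool :=
  if N is Some n then i <= n else true.

Definition isearch (s : nat -> position) (N : option nat) : Prop :=
  (forall i, in_range N i -> ipos (s i)) /\
  (forall i, in_range N i.+1 -> isucc (s i) (s i.+1)).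

Definition complete (s : nat -> position) (N : option nat) : Prop :=
  N = None \/ exists2 n, in_range N n & (s n).2 = set0.

Definition winning_search (s : nat -> position) (N : option nat) : Prop :=
  exists2 n, in_range N n & (s n).2 = set0.

Definition monotone_search (s : nat -> position) (N : option nat) : Prop :=
  forall i, in_range N i.+1 -> (s i.+1).2 \subset (s i).2.

Definition uses_at_most (k : nat) (s : nat -> position) (N : option nat) : Prop :=
  forall i, in_range N i -> size (s i).1 <= k.

Definition start : position := ([::], [set: T]).

(* i-strategy: on each i-position, prescribes the first component of some
   i-successor (values on non-i-positions are irrelevant) *)
Definition istrategy (sigma : position -> seq T) : Prop :=
  forall p, ipos p -> exists R', isucc p (sigma p, R').

Definition consistent (sigma : position -> seq T) (s : nat -> position)
  (N : option nat) : Prop :=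
  forall i, in_range N i.+1 -> (s i.+1).1 = sigma (s i).

Definition mono_win_strategy (k : nat) (sigma : position -> seq T) : Prop :=
  istrategy sigma /\
  forall (s : nat -> position) (N : option nat),
    s 0 = start -> isearch s N -> complete s N -> consistent sigma s N ->
    [/\ winning_search s N, monotone_search s N & uses_at_most k s N].

Definition lifo_mi_le (k : nat) : Prop :=
  exists sigma : position -> seq T, mono_win_strategy k sigma.

End Digraph.

From mathcomp Require Import all_boot zify.
Set Implicit Arguments.
Unset Strict Implicit.
Unset Printing Implicit Defensive.

(* The searchers keep a stack X = x_1 ... x_k with nested regions A_0 = V and
   A_i = C_i \ x_i, where C_i is the strongly connected component of x_i in
   A_(i-1).  While the robber territory R meets A_k, they choose a vertex d of
   A_k /\ R whose component C in A_k is entered by R only from inside, and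
   push a vertex x of C minimising cr(C \ x); otherwise they pop.  Because C
   is a trap, popping never lets the robber region grow, and every push
   removes x from it; so the potential |R| (|V| + 1) + |X| drops at every move
   while the robber is free, and the search is monotone and winning.  Since
   cr(C \ x) = cr(C) - 1 when C has a cycle and C = {x} otherwise, the sum
   cr(A_i) + [A_i <> 0] + i never exceeds cr(G) + 1, which bounds the height
   of the stack. *)

Section Reachability.
Variables (T : finType) (e : rel T).
Implicit Types (S A R D : {set T}) (x y z u v w : T).

Lemma reach_in_sub S S' x y :
  S \subset S' -> reach_in e S x y -> reach_in e S' x y.
Proof.
move=> sSS' /and3P[xS yS xy]; rewrite /reach_in !(subsetP sSS') //=.
apply: connect_sub xy => u v /and3P[uv uS vS]; apply: connect1.
by rewrite /within /= uv !(subsetP sSS').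
Qed.

Lemma reach_in_refl S x : x \in S -> reach_in e S x x.
Proof. by move=> xS; rewrite /reach_in xS connect0. Qed.

Lemma reach_in_trans S y x z :
  reach_in e S x y -> reach_in e S y z -> reach_in e S x z.
Proof.
move=> /and3P[xS _ xy] /and3P[_ zS yz].
by rewrite /reach_in xS zS (connect_trans xy yz).
Qed.

Lemma reach_in_edge S x y : x \in S -> y \in S -> e x y -> reach_in e S x y.
Proof. by move=> xS yS xy; rewrite /reach_in xS yS connect1 //= /within /= xy xS yS. Qed.

Lemma mem_scc_in A x y :
  (y \in scc_in e A x) = [&& y \in A, reach_in e A x y & reach_in e A y x].
Proof. by rewrite inE. Qed.

Lemma scc_in_sub A x : scc_in e A x \subset A.
Proof. by apply/subsetP=> y; rewrite mem_scc_in => /andP[]. Qed.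

Lemma mem_scc_in_self A x : x \in A -> x \in scc_in e A x.
Proof. by move=> xA; rewrite mem_scc_in xA reach_in_refl. Qed.

Lemma scc_in_eq A x y : y \in scc_in e A x -> scc_in e A y = scc_in e A x.
Proof.
rewrite mem_scc_in => /and3P[_ xy yx]; apply/setP=> z; rewrite !mem_scc_in.
apply/and3P/and3P => -[zA r1 r2]; split => //; apply: reach_in_trans;
  by [exact: xy | exact: r1 | exact: r2 | exact: yx].
Qed.

Lemma reach_in_scc A x a b : a \in scc_in e A x -> b \in scc_in e A x ->
  reach_in e A a b -> reach_in e (scc_in e A x) a b.
Proof.
move=> aD bD /and3P[_ _ /connectP[p ap eb]]; move: bD; rewrite eb {eb b}.
elim: p a aD ap => [|c p IH] a aD /=; first by move=> _ _; exact: reach_in_refl.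
move=> /andP[/and3P[ac aA cA] cp] lastD.
have cl : reach_in e A c (last c p).
  by rewrite /reach_in cA (subsetP (scc_in_sub A x)) //; apply/connectP; exists p.
move: aD (lastD); rewrite !mem_scc_in => /and3P[_ xa _] /and3P[_ _ lx].
have cD : c \in scc_in e A x.
  by rewrite mem_scc_in cA (reach_in_trans cl lx) (reach_in_trans xa) ?reach_in_edge.
apply: reach_in_trans (IH c cD cp lastD); apply: reach_in_edge => //.
rewrite mem_scc_in aA xa; apply: reach_in_trans (reach_in_edge aA cA ac) _.
exact: reach_in_trans cl lx.
Qed.

Lemma scc_in_strongly_connected A x :
  x \in A -> strongly_connected_in e (scc_in e A x).
Proof.
move=> xA; apply/andP; split; first by apply/set0Pn; exists x; exact: mem_scc_in_self.
apply/forall_inP=> y yD; apply/forall_inP=> z zD; apply: reach_in_scc => //.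
move: yD zD; rewrite !mem_scc_in => /and3P[_ _ yx] /and3P[_ xz _].
exact: reach_in_trans yx xz.
Qed.

Lemma strongly_connected_scc_in A x :
  strongly_connected_in e A -> x \in A -> scc_in e A x = A.
Proof.
move=> /andP[_ /forall_inP sc] xA; apply/setP=> y; rewrite mem_scc_in.
by case yA: (y \in A) => //=; rewrite (forall_inP (sc x xA)) ?(forall_inP (sc y yA)).
Qed.

Lemma acyclic_in_sub D A : D \subset A -> acyclic_in e A -> acyclic_in e D.
Proof.
move=> sDA /existsPn acA; apply/existsPn => x; apply/negP.
move=> /andP[xD /existsP[y /and3P[yD xy yx]]].
move: (acA x); rewrite (subsetP sDA) //= => /existsPn /(_ y).
by rewrite (subsetP sDA) // xy (reach_in_sub sDA yx).
Qed.

Lemma scc_in_acyclic A x :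
  x \in A -> acyclic_in e (scc_in e A x) -> scc_in e A x = [set x].
Proof.
move=> xA acD; apply/setP=> y; rewrite inE; apply/idP/eqP => [yD|->]; last first.
  exact: mem_scc_in_self.
have /andP[_ /forall_inP scD] := scc_in_strongly_connected xA.
have xD := mem_scc_in_self xA.
apply/eqP; apply: contraTT acD => yx; rewrite negbK.
have /and3P[_ _ /connectP[[|z p] /= yp xl]] := forall_inP (scD y yD) x xD.
  by rewrite xl eqxx in yx.
case/andP: yp => /and3P[yz _ zD] _.
apply/existsP; exists y; rewrite yD; apply/existsP; exists z.
by rewrite zD yz (forall_inP (scD z zD)).
Qed.

Lemma succ_closed_reach B R A d y : succ_closed_in e B R -> A \subset B ->
  d \in R -> reach_in e A d y -> y \in R.
Proof.
move=> /forall_inP clR sAB + /and3P[_ _ /connectP[p dp ->]].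
elim: p d dp => [|c p IH] d //= /andP[/and3P[dc _ cA] cp] dR.
apply: (IH c cp); move/forallP: (clR d dR) => /(_ c) /implyP; apply.
by rewrite dc (subsetP sAB).
Qed.

End Reachability.

Lemma geq_bigmin_cond (I : finType) (P : pred I) (F : I -> nat) k i :
  P i -> \big[minn/k]_(j | P j) F j <= F i.
Proof.
move=> Pi; rewrite unlock; elim: (index_enum I) (mem_index_enum i) => //= a r IH.
rewrite inE => /orP[/eqP<-|/IH ir]; first by rewrite Pi geq_minl.
by case: (P a) => //; apply: leq_trans (geq_minr _ _) ir.
Qed.

Lemma leq_bigmin (I : finType) (P : pred I) (F : I -> nat) k m :
  m <= k -> (forall i, P i -> m <= F i) -> m <= \big[minn/k]_(j | P j) F j.
Proof. by move=> mk mF; elim/big_ind: _ => // a b ma mb; rewrite leq_min ma mb. Qed.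

Section CycleRank.
Variables (T : finType) (e : rel T).
Implicit Types (S A D H : {set T}) (x v : T).

Lemma scc_in_proper S x : x \in S -> ~~ strongly_connected_in e S ->
  #|scc_in e S x| < #|S|.
Proof.
move=> xS; apply: contraNltn => le_S.
suff <- : scc_in e S x = S by exact: scc_in_strongly_connected.
by apply/eqP; rewrite eqEcard scc_in_sub.
Qed.

Lemma cr_fuel_eq n m S : #|S| < n -> #|S| < m -> cr_fuel e n S = cr_fuel e m S.
Proof.
elim: n m S => [|n IH] [|m] S //= ltn ltm; case: ifP => // _; case: ifP => scS.
  congr _.+1; apply: eq_bigr => v vS.
  by apply: IH; rewrite -ltnS (leq_trans _ ltn, leq_trans _ ltm) // (cardsD1 v S) vS.
apply: eq_bigr => _ /imsetP[x xS ->].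
by have lt := scc_in_proper xS (negbT scS); apply: IH; apply: leq_trans lt _.
Qed.

Lemma cr_fuelE n S : #|S| < n -> cr_fuel e n S = cr_of e S.
Proof. by move=> ltn; apply: cr_fuel_eq; rewrite ?ltnS ?max_card. Qed.

Lemma cr_fuel_le_card n S : cr_fuel e n S <= #|S|.
Proof.
elim: n S => [|n IH] S //=; case: ifP => // _; case: ifP => scS.
  case/andP: scS => /set0Pn[v vS] _.
  apply: leq_ltn_trans (geq_bigmin_cond _ _ vS) _.
  by apply: leq_ltn_trans (IH _) _; rewrite (cardsD1 v S) vS.
apply/bigmax_leqP => _ /imsetP[x xS ->].
exact: leq_trans (IH _) (subset_leq_card (scc_in_sub _ _ _)).
Qed.

Lemma cr_of_scc_le A x : x \in A -> cr_of e (scc_in e A x) <= cr_of e A.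
Proof.
move=> xA; case acA: (acyclic_in e A).
  by rewrite /cr_of /= (acyclic_in_sub (scc_in_sub _ A x) acA) acA.
case scA: (strongly_connected_in e A); first by rewrite strongly_connected_scc_in.
rewrite {2}/cr_of /= acA scA -(@cr_fuelE #|T|).
  by apply: (@leq_bigmax_cond _ _ (fun H => cr_fuel e #|T| H)); apply/imsetP; exists x.
exact: leq_trans (scc_in_proper xA (negbT scA)) (max_card _).
Qed.

Definition best_deletion D x := forall v, v \in D -> cr_of e (D :\ x) <= cr_of e (D :\ v).

Lemma cr_of_strongly_connected D x :
  strongly_connected_in e D -> ~~ acyclic_in e D -> x \in D -> best_deletion D x ->
  cr_of e D = (cr_of e (D :\ x)).+1.
Proof.
move=> scD acD xD x_min.
transitivity (\big[minn/#|T|]_(v in D) cr_fuel e #|T| (D :\ v)).+1.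
  by rewrite /cr_of /= (negbTE acD) scD.
congr _.+1.
have crE v : v \in D -> cr_fuel e #|T| (D :\ v) = cr_of e (D :\ v).
  by move=> vD; apply: cr_fuelE; apply: leq_trans (max_card D); rewrite (cardsD1 v D) vD.
apply/eqP; rewrite eqn_leq -(crE x xD) geq_bigmin_cond //=.
apply: leq_bigmin => [|v vD]; last by rewrite !crE // x_min.
exact: leq_trans (cr_fuel_le_card _ _) (max_card _).
Qed.

Lemma cr_of0 : cr_of e set0 = 0.
Proof. by rewrite /cr_of /= ifT //; apply/existsPn => x; rewrite inE. Qed.

Definition clear_cost S := cr_of e S + (S != set0).

Lemma clear_cost_scc_delete A x : x \in A -> best_deletion (scc_in e A x) x ->
  clear_cost (scc_in e A x :\ x) < clear_cost A.
Proof.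
move=> xA x_min; rewrite /clear_cost.
have -> : (A != set0) by apply/set0Pn; exists x.
rewrite addn1 ltnS; have le_cr := cr_of_scc_le xA.
have [acD|acD] := boolP (acyclic_in e (scc_in e A x)).
  by rewrite scc_in_acyclic // setDv eqxx addn0 cr_of0.
have xD := mem_scc_in_self e xA.
rewrite (cr_of_strongly_connected (scc_in_strongly_connected e xA) acD xD x_min) in le_cr.
by apply: leq_trans le_cr; rewrite addnC; case: (_ != _).
Qed.

End CycleRank.

Section Searches.
Variable T : finType.
Implicit Types (s : nat -> position T) (N : option nat).

Lemma in_range_pred N i : in_range N i.+1 -> in_range N i.
Proof. by case: N => //= n; exact: ltnW. Qed.

Lemma search_invariant (P : position T -> Prop) s N :
  P (s 0) -> (forall i, in_range N i.+1 -> P (s i) -> P (s i.+1)) ->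
  forall i, in_range N i -> P (s i).
Proof.
by move=> P0 Pstep; elim=> [|i IH] // ri; exact: Pstep ri (IH (in_range_pred ri)).
Qed.

Lemma winning_search_potential (phi : position T -> nat) s N :
  complete s N ->
  (forall i, in_range N i.+1 -> (s i).2 != set0 -> phi (s i.+1) < phi (s i)) ->
  winning_search s N.
Proof.
case: N => [n [//|win] _|_ dec]; first exact: win.
suff : winning_search s None \/ phi (s (phi (s 0)).+1) + (phi (s 0)).+1 <= phi (s 0).
  by case=> // ?; exfalso; lia.
elim: (phi (s 0)).+1 => [|i [win|IH]]; [by right; rewrite addn0 | by left |].
have [R0|R0] := eqVneq (s i).2 set0; first by left; exists i.
by right; move: (dec i isT R0) IH; lia.
Qed.

End Searches.

Section LifoStrategy.
Variables (T : finType) (e : rel T) (t0 : T).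
Implicit Types (A R D L M : {set T}) (X Y : seq T) (u v w x y d : T).

Definition region X : {set T} := foldl (fun A x => scc_in e A x :\ x) [set: T] X.

Lemma region_rcons X x : region (rcons X x) = scc_in e (region X) x :\ x.
Proof. by rewrite /region foldl_rcons. Qed.

Lemma mem_letters X z : (z \in letters X) = (z \in X).
Proof. by rewrite inE. Qed.

Lemma letters0 : letters [::] = set0 :> {set T}.
Proof. by apply/setP=> z; rewrite !inE. Qed.

Lemma letters_rcons X x : letters (rcons X x) = x |: letters X.
Proof. by apply/setP=> z; rewrite in_setU1 !mem_letters mem_rcons in_cons. Qed.

Lemma region_letters X z : z \in letters X -> z \notin region X.
Proof.
elim/last_ind: X => [|X x IH]; first by rewrite letters0 inE.
rewrite letters_rcons region_rcons in_setU1 in_setD1 => /orP[/eqP->|/IH zX].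
  by rewrite eqxx.
by apply/negP => /andP[_ /(subsetP (scc_in_sub _ _ _))]; rewrite (negbTE zX).
Qed.

Lemma region_subC X : region X \subset ~: letters X.
Proof.
by apply/subsetP => z zA; rewrite in_setC; apply: contraL zA; exact: region_letters.
Qed.

Lemma prefixs_rcons s X x : prefix s (rcons X x) = prefix s X || (s == rcons X x).
Proof. by elim: X s => [|y X IH] [|z s] //=; rewrite IH eqseq_cons andb_orr. Qed.

Lemma symdiffC L M : symdiff L M = symdiff M L.
Proof. by rewrite /symdiff setUC. Qed.

Lemma symdiff_setU1 L v : v \notin L -> symdiff L (v |: L) = [set v].
Proof.
move=> vL; apply/setP=> w; rewrite /symdiff !inE.
by case: (w =P v) => [->|_] /=; [rewrite (negbTE vL) | case: (w \in L)].
Qed.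

Definition legal_move X Y :=
  (prefix X Y || prefix Y X) && (#|symdiff (letters X) (letters Y)| == 1).

Lemma legal_push X x : x \notin letters X -> legal_move X (rcons X x).
Proof.
by move=> xX; rewrite /legal_move prefix_rcons letters_rcons symdiff_setU1 ?cards1.
Qed.

Lemma legal_pop Y y : y \notin Y -> legal_move (rcons Y y) Y.
Proof.
move=> yY; rewrite /legal_move prefix_rcons orbT letters_rcons symdiffC.
by rewrite symdiff_setU1 ?cards1 ?mem_letters.
Qed.

Lemma legal_pop_exists X : X != [::] ->
  exists i : 'I_(size X), #|symdiff (letters X) (letters (take i X))| == 1.
Proof.
elim/last_ind: X => [|Y y IH] // _.
have ltY : size Y < size (rcons Y y) by rewrite size_rcons.
have [yY|yY] := boolP (y \in Y); last first.
  by exists (Ordinal ltY); rewrite /= -cats1 take_size_cat // cats1 (andP (legal_pop yY)).2.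
have [|i hi] := IH; first by case: (Y) yY.
exists (Ordinal (ltn_trans (ltn_ord i) ltY)) => /=.
have -> : letters (rcons Y y) = letters Y.
  by rewrite letters_rcons (setUidPr _) ?sub1set ?mem_letters.
by rewrite -cats1 takel_cat // ltnW.
Qed.

(* Only used at positions violating [stack_inv] below: it makes the
   strategy total. *)
Definition fallback X : seq T :=
  if X is [::] then [:: t0]
  else if [pick i : 'I_(size X) | #|symdiff (letters X) (letters (take i X))| == 1]
       is Some i then take i X else X.

Lemma legal_fallback X : legal_move X (fallback X).
Proof.
case: X => [|x X]; first by apply: (@legal_push [::]); rewrite letters0 inE.
rewrite /fallback; case: pickP => [i hi|none].
  by rewrite /legal_move prefix_take orbT hi.
by have [i] := legal_pop_exists (isT : x :: X != [::]); rewrite none.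
Qed.

Definition sealed R D := forall u w, u \in R -> w \in D -> e u w -> u \in D.

Lemma sealed_sub R A D :
  sealed R A -> D \subset A -> sealed (A :&: R) D -> sealed R D.
Proof.
move=> sealedA DA sealedD u w uR wD uw; apply: (sealedD u w _ wD uw).
by rewrite inE uR (sealedA u w uR (subsetP DA w wD) uw).
Qed.

Definition ancestors_in A d := [set u in A | reach_in e A u d].

Definition source A R d0 := [arg min_(d < d0 in A :&: R) #|ancestors_in A d|].

Definition best_vertex D d0 := [arg min_(v < d0 in D) cr_of e (D :\ v)].

(* [t0] is only used once the robber is caught and the stack is empty. *)
Definition target X R :=
  if [pick d in region X :&: R] is Some d0 then source (region X) R d0 else t0.

Definition push_vertex X R :=
  let d := target X R in best_vertex (scc_in e (region X) d) d.

Definition pushing X R := (region X :&: R != set0) || (X == [::]).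

Definition main_move X R :=
  if pushing X R then rcons X (push_vertex X R) else take (size X).-1 X.

Definition lifo_strategy (p : position T) : seq T :=
  if legal_move p.1 (main_move p.1 p.2) then main_move p.1 p.2 else fallback p.1.

(* A vertex of [A :&: R] with fewest ancestors has a component that [R]
   enters only from inside: an outside ancestor would have strictly fewer. *)
Lemma source_sealed A R d0 : d0 \in A :&: R ->
  source A R d0 \in A :&: R /\ sealed (A :&: R) (scc_in e A (source A R d0)).
Proof.
move=> d0AR; rewrite /source; case: arg_minnP => // d dAR d_min; split => // u w uAR.
rewrite !mem_scc_in => /and3P[wA dw wd] uw.
have [[uA _] [dA _]] := (setIP uAR, setIP dAR).
have ud : reach_in e A u d := reach_in_trans (reach_in_edge uA wA uw) wd.
rewrite uA ud andbT /=; apply: contraTT (d_min u uAR) => du; rewrite -ltnNge.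
apply: proper_card; apply/properP; split.
  by apply/subsetP => z; rewrite !inE => /andP[-> zu]; exact: reach_in_trans zu ud.
by exists d; rewrite !inE dA ?reach_in_refl.
Qed.

Lemma best_vertexP D d0 :
  d0 \in D -> best_vertex D d0 \in D /\ best_deletion e D (best_vertex D d0).
Proof. by move=> d0D; rewrite /best_vertex; case: arg_minnP. Qed.

Lemma target_spec X R : pushing X R ->
  [/\ target X R \in region X, sealed (region X :&: R) (scc_in e (region X) (target X R))
    & R != set0 -> target X R \in R].
Proof.
rewrite /pushing /target; case: pickP => [d0 d0XR _|none].
  by have [/setIP[dX dR] dsealed] := source_sealed d0XR.
have XR0 : region X :&: R = set0 by apply/setP => u; rewrite none inE.
rewrite XR0 eqxx /= => /eqP X0; move: XR0; rewrite X0 setTI => R0.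
by rewrite R0; split=> [|u w|]; rewrite ?inE ?eqxx ?andbF.
Qed.

Lemma push_vertex_region X R : pushing X R -> push_vertex X R \in region X.
Proof.
case/target_spec=> dX _ _; apply: (subsetP (scc_in_sub e _ (target X R))).
exact: (best_vertexP (mem_scc_in_self e dX)).1.
Qed.

Lemma lifo_strategy_push X R :
  pushing X R -> lifo_strategy (X, R) = rcons X (push_vertex X R).
Proof.
move=> pXR; rewrite /lifo_strategy /main_move /= pXR legal_push //.
by apply: contraL (push_vertex_region pXR); exact: region_letters.
Qed.

Lemma lifo_strategy_pop Y y R : y \notin Y -> region (rcons Y y) :&: R = set0 ->
  lifo_strategy (rcons Y y, R) = Y.
Proof.
move=> yY R0; rewrite /lifo_strategy /main_move /pushing /= R0 eqxx /=.
have -> : (rcons Y y == [::]) = false by case: (Y).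
by rewrite size_rcons -cats1 take_size_cat // cats1 legal_pop.
Qed.

Lemma lifo_strategy_istrategy : istrategy e lifo_strategy.
Proof.
move=> p _; exists set0; have /andP[pre one] : legal_move p.1 (lifo_strategy p).
  by rewrite /lifo_strategy; case: ifP => // _; exact: legal_fallback.
apply/and4P; split=> //; last by apply/forall_inP => x; rewrite inE.
by rewrite /ipos sub0set; apply/forall_inP => x; rewrite inE.
Qed.

Record stack_inv (p : position T) : Prop := StackInv {
  stack_uniq : uniq p.1;
  stack_sealed : forall Y y, prefix (rcons Y y) p.1 ->
    y \in region Y /\ sealed p.2 (scc_in e (region Y) y);
  stack_budget : forall Y, prefix Y p.1 ->
    clear_cost e (region Y) + size Y <= (cycle_rank e).+1 }.

Definition potential (p : position T) := #|p.2| * #|T|.+1 + size p.1.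

Lemma stack_inv_start : stack_inv (start T).
Proof.
split=> //= [[]|[]] // _; rewrite addn0 /clear_cost /cycle_rank.
by case: (_ != _); rewrite ?addn1 ?addn0.
Qed.

Lemma stack_size_le p : stack_inv p -> size p.1 <= (cycle_rank e).+1.
Proof. by case=> _ _ /(_ _ (prefix_refl _)); apply: leq_trans; rewrite leq_addl. Qed.

Lemma stack_inv_sub X R R' : stack_inv (X, R) -> R' \subset R -> stack_inv (X, R').
Proof.
case=> uqX sealedX budgetX sR'R; split=> // Y y /sealedX[yY ysealed].
by split=> // u w /(subsetP sR'R); exact: ysealed.
Qed.

Lemma stack_inv_pop Y y R : stack_inv (rcons Y y, R) -> stack_inv (Y, R).
Proof.
have pY s : prefix s Y -> prefix s (rcons Y y).
  by move/prefix_trans; apply; exact: prefix_rcons.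
case=> /= uqY sealedY budgetY; split=> /= [|Z z /pY /sealedY|Z /pY /budgetY] //.
by move: uqY; rewrite rcons_uniq => /andP[].
Qed.

(* The region of [rcons Y y] lies inside the component of [y], which is
   sealed. *)
Lemma stack_inv_region_sealed X R :
  stack_inv (X, R) -> ipos e (X, R) -> sealed R (region X).
Proof.
case/lastP: X => [|Y y]; first by move=> _ _ u w _ _ _; rewrite /region inE.
case=> _ sealedX _ /andP[RL _] u w uR; rewrite region_rcons !in_setD1 => /andP[_ wD] uw.
have [_ ysealed] := sealedX Y y (prefix_refl _).
rewrite (ysealed u w uR wD uw) andbT; apply: contraTneq (subsetP RL u uR) => ->.
by rewrite in_setC letters_rcons setU11.
Qed.

Lemma isucc_sub X X' R R' : succ_closed_in e (~: (letters X :&: letters X')) R ->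
  isucc e (X, R) (X', R') -> R' \subset R.
Proof.
move=> clR /and4P[_ _ _ /forall_inP reachR']; apply/subsetP => v vR'.
have /existsP[u /andP[uR uv]] := reachR' v vR'.
exact: succ_closed_reach clR (subxx _) uR uv.
Qed.

Lemma push_budget X x : x \in region X -> best_deletion e (scc_in e (region X) x) x ->
  clear_cost e (region (rcons X x)) + size (rcons X x) <= clear_cost e (region X) + size X.
Proof.
move=> xX x_min; rewrite region_rcons size_rcons addnS -addSn leq_add2r.
exact: clear_cost_scc_delete.
Qed.

Lemma push_step X R R' x : stack_inv (X, R) -> ipos e (X, R) -> x \in region X ->
  sealed R (scc_in e (region X) x) -> best_deletion e (scc_in e (region X) x) x ->
  isucc e (X, R) (rcons X x, R') -> stack_inv (rcons X x, R') /\ R' \subset R.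
Proof.
move=> [uqX sealedX budgetX] /andP[_ clR] xX xsealed x_min hs.
have R'R : R' \subset R.
  by apply: isucc_sub hs; rewrite letters_rcons (setIidPl (subsetUr _ _)).
split=> //; split=> /=.
- by rewrite rcons_uniq uqX andbT -mem_letters; apply: contraL xX; exact: region_letters.
- move=> Y y; rewrite prefixs_rcons => /orP[/sealedX[yY ysealed]|/eqP/rcons_inj[-> ->]].
    by split=> // u w /(subsetP R'R); exact: ysealed.
  by split=> // u w /(subsetP R'R); exact: xsealed.
- move=> Y; rewrite prefixs_rcons => /orP[/budgetX //|/eqP->].
  exact: leq_trans (push_budget xX x_min) (budgetX X (prefix_refl X)).
Qed.

Lemma push_potential X R R' x : uniq (rcons X x) -> x \in R -> x \notin R' ->
  R' \subset R -> potential (rcons X x, R') < potential (X, R).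
Proof.
move=> uqXx xR xR' R'R.
have ltR : #|R'| < #|R| by apply: proper_card; apply/properP; split=> //; exists x.
have : size (rcons X x) <= #|T| by rewrite -(card_uniqP uqXx) max_card.
rewrite /potential /= size_rcons; nia.
Qed.

(* Popping is safe once the region of the top is free of the robber: the
   only new escape would be through the popped vertex y, and every robber
   vertex adjacent to y lies in the (robber-free) region of y. *)
Lemma pop_succ_closed Y y R : stack_inv (rcons Y y, R) -> ipos e (rcons Y y, R) ->
  region (rcons Y y) :&: R = set0 -> succ_closed_in e (~: letters Y) R.
Proof.
move=> inv /andP[RL clR] R0; apply/forall_inP => u uR; apply/forallP => w.
apply/implyP => /andP[uw wY]; have [wy|wy] := eqVneq w y; last first.
  move/forall_inP: clR => /(_ u uR) /forallP /(_ w) /implyP; apply.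
  by rewrite uw in_setC letters_rcons in_setU1 negb_or wy -in_setC.
have [yY ysealed] := stack_sealed inv (prefix_refl _).
rewrite {}wy in uw; have uD := ysealed u y uR (mem_scc_in_self e yY) uw.
have uy : u != y.
  by apply: contraTneq (subsetP RL u uR) => ->; rewrite in_setC letters_rcons setU11.
suff : u \in region (rcons Y y) :&: R by rewrite R0 inE.
by rewrite inE region_rcons in_setD1 uy uD uR.
Qed.

Lemma lifo_strategy_push_step X R R' : pushing X R -> stack_inv (X, R) -> ipos e (X, R) ->
  isucc e (X, R) (lifo_strategy (X, R), R') ->
  [/\ stack_inv (lifo_strategy (X, R), R'), R' \subset R &
      R != set0 -> potential (lifo_strategy (X, R), R') < potential (X, R)].
Proof.
move=> pXR inv ipXR; rewrite lifo_strategy_push //.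
have [dX dsealed dR] := target_spec pXR; have xX := push_vertex_region pXR.
move: xX; rewrite /push_vertex; set d := target X R in dX dsealed dR *.
have [xD x_min] := best_vertexP (mem_scc_in_self e dX).
set x := best_vertex _ d in xD x_min * => xX hs.
have Dx : scc_in e (region X) x = scc_in e (region X) d := scc_in_eq xD.
have xsealed : sealed R (scc_in e (region X) x).
  rewrite Dx; apply: sealed_sub (stack_inv_region_sealed inv ipXR) _ dsealed.
  exact: scc_in_sub.
rewrite -Dx in x_min; have [inv' R'R] := push_step inv ipXR xX xsealed x_min hs.
have /and4P[/andP[R'L _] _ _ _] := hs.
split=> // /dR dR'; apply: push_potential R'R; first exact: stack_uniq inv'.
- apply: succ_closed_reach (andP ipXR).2 (region_subC X) dR' _.
  by move: xD; rewrite mem_scc_in => /and3P[].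
- by apply/negP => /(subsetP R'L); rewrite in_setC letters_rcons setU11.
Qed.

Lemma lifo_strategy_pop_step X R R' : ~~ pushing X R -> stack_inv (X, R) -> ipos e (X, R) ->
  isucc e (X, R) (lifo_strategy (X, R), R') ->
  [/\ stack_inv (lifo_strategy (X, R), R'), R' \subset R &
      potential (lifo_strategy (X, R), R') < potential (X, R)].
Proof.
rewrite /pushing negb_or => /andP[/negPn/eqP R0].
case/lastP: X R0 => [|Y y] // R0 _ inv ipYy.
have yY : y \notin Y by have := stack_uniq inv; rewrite rcons_uniq => /andP[].
rewrite lifo_strategy_pop // => hs.
have R'R : R' \subset R.
  apply: isucc_sub hs; rewrite letters_rcons (setIidPr (subsetUr _ _)).
  exact: pop_succ_closed inv ipYy R0.
split=> //; first exact: stack_inv_sub (stack_inv_pop inv) R'R.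
by rewrite /potential /= size_rcons; have := subset_leq_card R'R; nia.
Qed.

Lemma lifo_strategy_step p R' :
  stack_inv p -> ipos e p -> isucc e p (lifo_strategy p, R') ->
  [/\ stack_inv (lifo_strategy p, R'), R' \subset p.2 &
      p.2 != set0 -> potential (lifo_strategy p, R') < potential p].
Proof.
case: p => X R; have [pXR|pXR] := boolP (pushing X R) => inv ipXR.
  exact: lifo_strategy_push_step.
by case/(lifo_strategy_pop_step pXR inv ipXR).
Qed.

End LifoStrategy.

Theorem lemma3 (T : finType) (e : rel T) (e_irr : irreflexive e)
  (T_nonempty : 0 < #|T|) :
  lifo_mi_le e (cycle_rank e).+1.
Proof.
case/card_gt0P: T_nonempty => t0 _.
exists (lifo_strategy e t0); split; first exact: lifo_strategy_istrategy.
move=> s N s0 [ipos_s isucc_s] complete_s consistent_s.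
have step i : in_range N i.+1 -> stack_inv e (s i) ->
    [/\ stack_inv e (s i.+1), (s i.+1).2 \subset (s i).2 &
        (s i).2 != set0 -> potential (s i.+1) < potential (s i)].
  move=> ri inv; have := isucc_s i ri.
  rewrite [s i.+1]surjective_pairing (consistent_s i ri).
  exact: lifo_strategy_step inv (ipos_s i (in_range_pred ri)).
have inv : forall i, in_range N i -> stack_inv e (s i).
  apply: search_invariant => [|i ri /(step i ri)[] //].
  by rewrite s0; exact: stack_inv_start.
split=> [|i ri|i ri].
- apply: (winning_search_potential (phi := @potential T) complete_s) => i ri.
  by case: (step i ri (inv i (in_range_pred ri))).
- by case: (step i ri (inv i (in_range_pred ri))).
- exact: stack_size_le (inv i ri).
Qed.
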